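(* Let $\mathcal{X}=(\mathbf{x}_n)_{n=1}^\infty$ be a spreading sequence in a quasi-Banach space $\mathbb{X}$. Then $\mathcal{X}$ is bounded.
   Context: For a sequence $(\mathbf{x}_n)$ in $\mathbb{X}$, $\mathcal{N}\subseteq\mathbb{N}$ and an injective $\psi\colon\mathcal{N}\to\mathbb{N}$, $\psi$ is a translation if the assignment $\mathbf{x}_n\mapsto\mathbf{x}_{\psi(n)}$, $n\in\mathcal{N}$, defines a linear map on $\operatorname{span}(\mathbf{x}_n\colon n\in\mathcal{N})$ extending to an isomorphism $T_\psi$ from the closed linear span of $\{\mathbf{x}_n\colon n\in\mathcal{N}\}$ onto the closed linear span of $\{\mathbf{x}_n\colon n\in\psi(\mathcal{N})\}$. The sequence is spreading if every increasing map $\psi\colon\mathbb{N}\to\mathbb{N}$ is a translation. *)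

(* Quasi-Banach spaces over a numeric field K (covers the
   real field R : realType and the complex field R[i]). *)
From mathcomp Require Import all_boot all_order all_algebra.
Set Implicit Arguments. Unset Strict Implicit. Unset Printing Implicit Defensive.
Import Order.TTheory GRing.Theory Num.Theory.
Local Open Scope ring_scope.

Section QuasiBanach.
Variables (K : numFieldType) (V : lmodType K) (nrm : V -> K).

Definition quasi_norm : Prop :=
  [/\ forall v, 0 <= nrm v,
      forall v, nrm v = 0 -> v = 0,
      forall (a : K) v, nrm (a *: v) = `|a| * nrm v
    & exists kappa : K, 1 <= kappa /\
        forall u v, nrm (u + v) <= kappa * (nrm u + nrm v)].

Definition cauchy_seq (u : nat -> V) : Prop :=
  forall e : K, 0 < e -> exists N, forall m n, (N <= m)%N -> (N <= n)%N ->
    nrm (u m - u n) < e.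

Definition converges_to (u : nat -> V) (l : V) : Prop :=
  forall e : K, 0 < e -> exists N, forall n, (N <= n)%N -> nrm (u n - l) < e.

Definition complete_qn : Prop :=
  forall u, cauchy_seq u -> exists l, converges_to u l.

Definition quasi_Banach : Prop := quasi_norm /\ complete_qn.

Definition lspan (S : V -> Prop) : V -> Prop :=
  fun v => exists (n : nat) (c : 'I_n -> K) (f : 'I_n -> V),
    (forall i, S (f i)) /\ v = \sum_(i < n) c i *: f i.

Definition qclosure (A : V -> Prop) : V -> Prop :=
  fun v => forall e : K, 0 < e -> exists a, A a /\ nrm (v - a) < e.

Definition clspan (S : V -> Prop) : V -> Prop := qclosure (lspan S).

Definition linear_on (A : V -> Prop) (T : V -> V) : Prop :=
  forall (a : K) u v, A u -> A v -> T (a *: u + v) = a *: T u + T v.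

Definition bounded_on (A : V -> Prop) (T : V -> V) : Prop :=
  exists C : K, forall u, A u -> nrm (T u) <= C * nrm u.

Definition isomorphism_onto (A B : V -> Prop) (T : V -> V) : Prop :=
  exists S : V -> V,
    [/\ forall u, A u -> B (T u),
        forall v, B v -> A (S v),
        (forall u, A u -> S (T u) = u) /\ (forall v, B v -> T (S v) = v),
        (linear_on A T /\ bounded_on A T)
      & (linear_on B S /\ bounded_on B S)].

(* psi : N -> nat (given as a total function on nat, relevant on N) injective
   on N is a translation for x if n |-> x (psi n) extends to an isomorphism
   T_psi from [x_n : n in N] onto [x_n : n in psi(N)]. *)
Definition translation (x : nat -> V) (N : nat -> Prop) (psi : nat -> nat)
  : Prop :=
  (forall m n, N m -> N n -> psi m = psi n -> m = n) /\
  exists T : V -> V,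
    (forall n, N n -> T (x n) = x (psi n)) /\
    isomorphism_onto (clspan (fun v => exists n, N n /\ v = x n))
                     (clspan (fun v => exists n, N n /\ v = x (psi n))) T.

Definition spreading (x : nat -> V) : Prop :=
  forall psi : nat -> nat, {homo psi : m n / (m < n)%N} ->
    translation x (fun _ => True) psi.

Definition bounded_seq (x : nat -> V) : Prop :=
  exists C : K, forall n, nrm (x n) <= C.

End QuasiBanach.

(* If (x_n) were unbounded, one could choose an increasing psi with
   |x_(psi j)| > |x_j|^2 for every j.  The translation T_psi is bounded,
   |x_(psi j)| <= C |x_j|, and for a j with |x_j| > C this gives
   |x_(psi j)| <= |x_j|^2, a contradiction. *)
From mathcomp Require Import all_boot all_order all_algebra.
From Stdlib Require Import Classical.
Set Implicit Arguments.
Unset Strict Implicit.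
Unset Printing Implicit Defensive.
Import Order.TTheory GRing.Theory Num.Theory.

Local Open Scope ring_scope.

Section UnboundedSequences.
Variables (K : numFieldType) (f : nat -> K).
Hypotheses (f_ge0 : forall n, 0 <= f n) (f_unbounded : ~ exists C, forall n, f n <= C).

Lemma unbounded_tail (p : nat) (t : K) :
  0 <= t -> exists m, (p <= m)%N && (t < f m).
Proof.
elim: p t => [|p IHp] t t_ge0.
  have [n ltn] : exists n, t < f n.
    apply: NNPP => none; apply: f_unbounded; exists t => n.
    rewrite real_leNgt ?ger0_real //; apply/negP => ltn.
    by apply: none; exists n.
  by exists n.
have [m /andP[le_pm lt_m]] := IHp (t + f p) (addr_ge0 t_ge0 (f_ge0 p)).
exists m; apply/andP; split.
  rewrite ltn_neqAle le_pm andbT; apply/eqP => Epm.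
  by move: lt_m; rewrite -Epm gtrDr => /(le_lt_trans t_ge0); rewrite ltxx.
by apply: le_lt_trans lt_m; rewrite lerDl.
Qed.

Lemma exists_increasing_dominating (g : nat -> K) : (forall j, 0 <= g j) ->
  exists psi : nat -> nat,
    {homo psi : m n / (m < n)%N} /\ forall j, g j < f (psi j).
Proof.
move=> g_ge0.
pose next p j := ex_minn (@unbounded_tail p (g j) (g_ge0 j)).
have [next_ge next_gt] :
    (forall p j, p <= next p j)%N /\ forall p j, g j < f (next p j).
  by split=> p j; rewrite /next; case: ex_minnP => m /andP[].
pose fix psi j := if j is k.+1 then next (psi k).+1 j else next 0%N j.
exists psi; split; last by case=> [|j]; apply: next_gt.
apply: homo_ltn => [a b c|j]; first exact: ltn_trans.
exact: next_ge.
Qed.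

End UnboundedSequences.

Section QuasiNormed.
Variables (K : numFieldType) (V : lmodType K) (nrm : V -> K).
Hypotheses (nrm_ge0 : forall v, 0 <= nrm v)
  (nrmZ : forall (a : K) v, nrm (a *: v) = `|a| * nrm v).

Lemma nrm0 : nrm 0 = 0.
Proof. by rewrite -(scale0r 0) nrmZ normr0 mul0r. Qed.

Lemma clspan_sub (S : V -> Prop) v : S v -> clspan nrm S v.
Proof.
move=> Sv e e_gt0; exists v; split; last by rewrite subrr nrm0.
exists 1%N, (fun _ => 1), (fun _ => v); split=> //.
by rewrite big_ord1 scale1r.
Qed.

Lemma bounded_on_ge0 (A : V -> Prop) (T : V -> V) : bounded_on nrm A T ->
  exists2 C, 0 <= C & forall u, A u -> nrm (T u) <= C * nrm u.
Proof.
case=> C boundC; exists `|C| => // u Au.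
have Cu_ge0 : 0 <= C * nrm u := le_trans (nrm_ge0 _) (boundC u Au).
by rewrite -(ger0_norm (nrm_ge0 u)) -normrM ger0_norm // boundC.
Qed.

Lemma translation_bounded (x : nat -> V) (N : nat -> Prop) (psi : nat -> nat) :
  translation nrm x N psi ->
  exists2 C, 0 <= C & forall n, N n -> nrm (x (psi n)) <= C * nrm (x n).
Proof.
case=> _ [T [Tx [_ [_ _ _ [_ boundT] _]]]].
have [C C_ge0 boundC] := bounded_on_ge0 boundT.
exists C => // n Nn; rewrite -Tx //.
by apply/boundC/clspan_sub; exists n.
Qed.

End QuasiNormed.

Theorem lemma2p4 (K : numFieldType) (V : lmodType K) (nrm : V -> K)
  (x : nat -> V) :
  quasi_Banach nrm -> spreading nrm x -> bounded_seq nrm x.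
Proof.
move=> [[nrm_ge0 _ nrmZ _] _] spreading_x; apply: NNPP => unbounded_x.
have nx_ge0 n : 0 <= nrm (x n) := nrm_ge0 (x n).
have [psi [psi_incr psi_dominates]] :=
  exists_increasing_dominating nx_ge0 unbounded_x
    (fun j => mulr_ge0 (nx_ge0 j) (nx_ge0 j)).
have [C C_ge0 boundC] := translation_bounded nrm_ge0 nrmZ (spreading_x psi psi_incr).
have [j /andP[_ ltCj]] := unbounded_tail nx_ge0 unbounded_x 0 C_ge0.
have := lt_le_trans (psi_dominates j) (boundC j I).
rewrite ltr_pM2r ?(le_lt_trans C_ge0 ltCj) // => /(lt_trans ltCj).
by rewrite ltxx.
Qed.
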